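(* Let $d\ge2$, $\omega:=\frac1{\sqrt d}\sum_{i=1}^de_i\otimes e_i$, $P_\omega:=\omega\omega^\ast$, and for $\alpha\in[1,d]$ let $f_d(\alpha):=\mu_\alpha(P_\omega)$ and $t^\ast_\alpha:=\frac{k+\theta^2}{(k+\theta)^2}$, where $k=\lfloor\alpha\rfloor$, $\theta=\alpha-k$. Then $f_d(\alpha)=\frac{1}{d\,t^\ast_\alpha}$ for every $\alpha\in[1,d]$. In particular, along the maps $\Phi_t(X)=\mathrm{Tr}(X)I_d-tX$, $t\in(0,1]$, one has $\Phi_t\in\mathsf P_\alpha$ if and only if $t\le 1/(d f_d(\alpha))$.
   Context: Schmidt coefficients $s_1(\psi)\ge\dots\ge s_d(\psi)\ge0$ of $\psi=\sum a_{ij}e_i\otimes e_j\in\mathbb C^d\otimes\mathbb C^d$ are the singular values of $[a_{ij}]$. For $\alpha\in[1,d]$ with $k=\lfloor\alpha\rfloor$, $\theta=\alpha-k$, $r=\lceil\alpha\rceil$, a unit vector $\psi$ is $\alpha$-admissible if $s_j(\psi)=0$ for $j\ge r+1$ and, when $\theta>0$, $s_{k+1}(\psi)\le\frac\theta k\sum_{j=1}^ks_j(\psi)$; $\mathcal V_\alpha$ is the set of these. For Hermitian $W$, $\mu_\alpha(W):=\max\{\langle\psi,W\psi\rangle:\psi\in\mathcal V_\alpha\}$. The Choi matrix is $C_\Phi=\sum_{i,j}E_{ij}\otimes\Phi(E_{ij})$, and a Hermitian-preserving $\Phi$ is in $\mathsf P_\alpha$ if $\langle\psi,C_\Phi\psi\rangle\ge0$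 for all $\psi\in\mathcal V_\alpha$. *)

From HB Require Import structures.
From mathcomp Require Import all_boot all_order all_algebra.
From mathcomp Require Import reals.
From mathcomp Require Import complex mxtens.
Set Implicit Arguments. Unset Strict Implicit. Unset Printing Implicit Defensive.
Import Order.TTheory GRing.Theory Num.Theory.
Local Open Scope ring_scope.
Local Open Scope complex_scope.

Section Defs.
Variable R : realType.
Local Notation C := R[i].

Definition adjmx {m n} (A : 'M[C]_(m, n)) : 'M[C]_(n, m) := (map_mx (@conjc R) A)^T.
Definition hermitianmx {n} (A : 'M[C]_n) : Prop := adjmx A = A.

Definition qform {n} (W : 'M[C]_n) (psi : 'cV[C]_n) : C := (adjmx psi *m W *m psi) 0 0.

Variable d : nat.

Definition ket (i : 'I_d) : 'cV[C]_d := delta_mx i 0.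

Definition vec_of (A : 'M[C]_d) : 'cV[C]_(d * d) :=
  \sum_(i < d) \sum_(j < d) A i j *: tensmx (ket i) (ket j).

(* s_1 >= ... >= s_d >= 0 are the singular values of A, i.e. the s_j^2 are
   the eigenvalues (with multiplicity) of A^* A *)
Definition schmidt_coeffs (A : 'M[C]_d) (s : 'I_d -> R) : Prop :=
  (forall i j : 'I_d, (i <= j)%N -> s j <= s i) /\
  (forall i, 0 <= s i) /\
  char_poly (adjmx A *m A) = \prod_(i < d) ('X - ((s i ^+ 2)%:C)%:P).

(* k = floor alpha, theta = alpha - k, r = ceil alpha (for alpha >= 1) *)
Definition kfl (alpha : R) : nat := Num.truncn alpha.
Definition theta (alpha : R) : R := alpha - (kfl alpha)%:R.
Definition rcl (alpha : R) : nat :=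
  if theta alpha == 0 then kfl alpha else (kfl alpha).+1.

(* psi in V_alpha (indices are 0-based: s_{j} (1-based) = s (j-1)) *)
Definition admissible (alpha : R) (psi : 'cV[C]_(d * d)) : Prop :=
  qform 1%:M psi = 1 /\
  exists (A : 'M[C]_d) (s : 'I_d -> R),
    psi = vec_of A /\ schmidt_coeffs A s /\
    (forall j : 'I_d, (rcl alpha <= j)%N -> s j = 0) /\
    (0 < theta alpha ->
       forall j : 'I_d, nat_of_ord j = kfl alpha ->
         s j <= theta alpha / (kfl alpha)%:R *
                \sum_(i < d | (i < kfl alpha)%N) s i).

Definition is_mu (alpha : R) (W : 'M[C]_(d * d)) (m : R) : Prop :=
  (exists psi, admissible alpha psi /\ qform W psi = m%:C) /\
  (forall psi, admissible alpha psi -> qform W psi <= m%:C).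

Definition omega : 'cV[C]_(d * d) :=
  ((Num.sqrt (d%:R : R))^-1)%:C *: \sum_(i < d) tensmx (ket i) (ket i).
Definition Pomega : 'M[C]_(d * d) := omega *m adjmx omega.

Definition choi (Phi : 'M[C]_d -> 'M[C]_d) : 'M[C]_(d * d) :=
  \sum_(i < d) \sum_(j < d) tensmx (delta_mx i j) (Phi (delta_mx i j)).

Definition herm_preserving (Phi : 'M[C]_d -> 'M[C]_d) : Prop :=
  forall X, hermitianmx X -> hermitianmx (Phi X).

Definition in_P (alpha : R) (Phi : 'M[C]_d -> 'M[C]_d) : Prop :=
  herm_preserving Phi /\
  forall psi, admissible alpha psi -> 0 <= qform (choi Phi) psi.

Definition Phi_t (t : R) (X : 'M[C]_d) : 'M[C]_d :=
  (\tr X) *: 1%:M - t%:C *: X.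

End Defs.

Definition tstar {R : realType} (alpha : R) : R :=
  ((kfl alpha)%:R + theta alpha ^+ 2) / ((kfl alpha)%:R + theta alpha) ^+ 2.

(* Writing a unit vector as psi = vec_of A, one has <psi, P_omega psi> = |tr A|^2 / d
   and tr (A^* A) = sum_i s_i^2 = 1.  Diagonalising A^* A unitarily shows |tr A| <= sum_i s_i,
   with equality for diagonal A, so mu_alpha(P_omega) is the maximum of (sum_i s_i)^2 / d
   over admissible Schmidt profiles with sum_i s_i^2 = 1.  Cauchy-Schwarz on the first
   k = floor(alpha) coefficients together with the constraint on s_(k+1) bounds
   (sum_i s_i)^2 by (k + theta)^2 / (k + theta^2), with equality for s proportional to
   (1, ..., 1, theta, 0, ..., 0).  Finally the Choi matrix of Phi_t is I - t d P_omega,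
   so Phi_t is in P_alpha iff t d mu_alpha(P_omega) <= 1. *)

From mathcomp Require Import all_boot all_order all_algebra.
From mathcomp Require Import reals complex mxtens.
From mathcomp Require Import ring lra.

Set Implicit Arguments. Unset Strict Implicit. Unset Printing Implicit Defensive.
Import Order.TTheory GRing.Theory Num.Theory.
Local Open Scope ring_scope.
Local Open Scope complex_scope.

Lemma sqr_sum_orthogonal (R : comNzRingType) (I : finType) (P : pred I) (f : I -> R) :
  (forall i j, P i -> P j -> i != j -> f i * f j = 0) ->
  (\sum_(i | P i) f i) ^+ 2 = \sum_(i | P i) f i ^+ 2.
Proof.
move=> f_orth; rewrite expr2 big_distrlr /=; apply: eq_bigr => i Pi.
rewrite (bigD1 i) //= big1 ?addr0 // => j /andP[Pj ji].
by apply: f_orth; rewrite // eq_sym.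
Qed.

Section RealInequalities.
Variable R : realFieldType.

Lemma sqr_sum_le_count_sum_sqr (I : Type) (r : seq I) (P : pred I) (f : I -> R) :
  (\sum_(i <- r | P i) f i) ^+ 2 <=
  (\sum_(i <- r | P i) 1) * \sum_(i <- r | P i) f i ^+ 2.
Proof.
elim: r => [|x r IH]; first by rewrite !big_nil mul0r expr0n.
rewrite !big_cons; case: (P x) => //.
set S := \sum_(i <- r | P i) f i in IH *.
set n := \sum_(i <- r | P i) (1 : R) in IH *.
set Q := \sum_(i <- r | P i) f i ^+ 2 in IH *.
have n_ge0 : 0 <= n by rewrite sumr_ge0.
have Q_ge0 : 0 <= Q by rewrite sumr_ge0 // => i _; rewrite sqr_ge0.
have [n0|n_neq0] := eqVneq n 0.
  have S0 : S = 0 by apply/eqP; rewrite -sqrf_eq0 eq_le sqr_ge0 -[0](mul0r Q) -n0 IH.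
  by rewrite n0 S0; nra.
have n_gt0 : 0 < n by rewrite lt_def n_neq0 n_ge0.
suff : 2 * f x * S <= Q + n * f x ^+ 2 by nra.
rewrite -(ler_pM2l n_gt0); have := sqr_ge0 (S - n * f x); nra.
Qed.

(* After bounding [k * Q] below by [S^2], the difference of the two sides
   factors as [(t S - k x) ((2k + t - k t) S - k (k - 1 + 2t) x)]. *)
Lemma sqr_sum_extension_le (k t S Q x : R) :
  1 <= k -> 0 <= t <= 1 -> 0 <= S -> 0 <= x ->
  k * x <= t * S -> S ^+ 2 <= k * Q ->
  (S + x) ^+ 2 * (k + t ^+ 2) <= (k + t) ^+ 2 * (Q + x ^+ 2).
Proof.
move=> k_ge1 /andP[t_ge0 t_le1] S_ge0 x_ge0 kx_le S2_le.
have factor_ge0 : 0 <= (t * S - k * x) * ((2 * k + t - k * t) * S - k * (k - 1 + 2 * t) * x).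
  apply: mulr_ge0; first lra.
  have : k * (k - 1 + 2 * t) * x <= (k - 1 + 2 * t) * (t * S).
    by rewrite mulrAC mulrC ler_wpM2l //; lra.
  have : 0 <= S * ((k + t) * (1 - t)) by rewrite !mulr_ge0 //; lra.
  nra.
rewrite -(@ler_pM2l _ k); last lra.
have : (k + t) ^+ 2 * S ^+ 2 <= (k + t) ^+ 2 * (k * Q) by rewrite ler_wpM2l ?sqr_ge0.
nra.
Qed.

End RealInequalities.

Section AdmissibleProfile.
Variables (R : realFieldType) (d k : nat) (t : R).

Definition admissible_profile (s : 'I_d -> R) : Prop :=
  (forall j : 'I_d, ((if t == 0%R then k else k.+1) <= j)%N -> s j = 0) /\
  (0 < t -> forall j : 'I_d, nat_of_ord j = k ->
     s j <= t / k%:R * \sum_(i < d | (i < k)%N) s i).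

Variable s : 'I_d -> R.
Hypotheses (s_ge0 : forall i, 0 <= s i) (s_adm : admissible_profile s).

Local Notation head := (\sum_(i < d | (i < k)%N) s i).
Local Notation tail := (\sum_(i < d | ~~ (i < k)%N) s i).

Lemma admissible_tail_le : 0 <= t -> k%:R * tail <= t * head.
Proof.
case: s_adm => s_zero s_kth t_ge0.
have head_ge0 : 0 <= head by rewrite sumr_ge0.
have [k0|k_gt0] := posnP k; first by rewrite k0 mul0r mulr_ge0 // sumr_ge0.
have [t0|t_neq0] := eqVneq t 0.
  rewrite big1 ?mulr0 ?mulr_ge0 // => i; rewrite -leqNgt => ki.
  by apply: s_zero; rewrite t0 eqxx.
have t_gt0 : 0 < t by rewrite lt_def t_neq0.
have [kd|dk] := ltnP k d; last first.
  by rewrite big_pred0 ?mulr0 ?mulr_ge0 // => i; rewrite (leq_trans (ltn_ord i)).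
pose jk : 'I_d := Ordinal kd.
rewrite (bigD1 jk) /= ?ltnn // big1 ?addr0.
  have k_neq0 : k%:R != 0 :> R by rewrite pnatr_eq0 -lt0n.
  have -> : t * head = k%:R * (t / k%:R * head) by field.
  by rewrite ler_wpM2l ?ler0n ?s_kth.
move=> i /andP[]; rewrite -leqNgt => ki i_neq; apply: s_zero; rewrite (negbTE t_neq0).
by rewrite ltn_neqAle ki andbT; apply: contra i_neq => /eqP ik; apply/eqP/val_inj.
Qed.

Lemma admissible_sqr_tail : tail ^+ 2 = \sum_(i < d | ~~ (i < k)%N) s i ^+ 2.
Proof.
case: s_adm => s_zero _; apply: sqr_sum_orthogonal => i j; rewrite -!leqNgt => ki kj ij.
have past_k (l : 'I_d) : (k < l)%N -> s l = 0.
  by move=> kl; apply: s_zero; case: ifP => _ //; apply: ltnW.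
have [ji|ij'] := ltnP j i; first by rewrite past_k ?mul0r // (leq_ltn_trans kj).
by rewrite [s j]past_k ?mulr0 // (leq_ltn_trans ki) // ltn_neqAle ij ij'.
Qed.

Lemma admissible_sqr_sum_le : (1 <= k <= d)%N -> 0 <= t <= 1 ->
  (\sum_i s i) ^+ 2 * (k%:R + t ^+ 2) <= (k%:R + t) ^+ 2 * \sum_i s i ^+ 2.
Proof.
move=> /andP[k_ge1 kd] t01; have /andP[t_ge0 _] := t01.
have head_CS : head ^+ 2 <= k%:R * \sum_(i < d | (i < k)%N) s i ^+ 2.
  have := sqr_sum_le_count_sum_sqr (index_enum 'I_d) (fun i : 'I_d => (i < k)%N) s.
  by rewrite -(big_ord_widen d (fun=> 1) kd) sumr_const card_ord.
rewrite (bigID (fun i : 'I_d => (i < k)%N)) [X in _ <= _ * X](bigID (fun i : 'I_d => (i < k)%N)) /=.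
rewrite -admissible_sqr_tail; apply: sqr_sum_extension_le => //.
- by rewrite ler1n.
- by rewrite sumr_ge0.
- by rewrite sumr_ge0.
- exact: admissible_tail_le.
Qed.

End AdmissibleProfile.

Lemma sum_delta (V : nzRingType) (I : finType) (i : I) (F : I -> V) :
  \sum_a (i == a)%:R * F a = F i.
Proof.
rewrite (bigD1 i) //= eqxx mul1r big1 ?addr0 // => a a_neq.
by rewrite eq_sym (negbTE a_neq) mul0r.
Qed.

Lemma sum_mxtens_index (V : nmodType) m n (F : 'I_(m * n) -> V) :
  \sum_k F k = \sum_i \sum_j F (mxtens_index (i, j)).
Proof.
rewrite pair_big (reindex (@mxtens_index m n)) /=; first by apply: eq_bigr => -[].
by exists (@mxtens_unindex m n) => k _; [apply: mxtens_indexK | apply: mxtens_unindexK].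
Qed.

Lemma char_poly_similar (R : comNzRingType) n (P Q X : 'M[R]_n) :
  Q *m P = 1%:M -> char_poly (Q *m X *m P) = char_poly X.
Proof.
move=> QP1; rewrite /char_poly /char_poly_mx !map_mxM.
set Qp := map_mx polyC Q; set Pp := map_mx polyC P.
have QPp1 : Qp *m Pp = 1%:M by rewrite -map_mxM QP1 map_mx1.
have X_similar : ('X%:M : 'M_n) = Qp *m 'X%:M *m Pp.
  by rewrite -mulmxA -scalar_mxC mulmxA QPp1 mul1mx.
rewrite [X in \det (X - _)]X_similar -mulmxBl -mulmxBr !det_mulmx.
by rewrite mulrAC -det_mulmx QPp1 det1 mul1r.
Qed.

Lemma eq_sum_roots (F : fieldType) (V : nmodType) n (a b : 'I_n -> F) (g : F -> V) :
  \prod_i ('X - (a i)%:P) = \prod_i ('X - (b i)%:P) ->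
  \sum_i g (a i) = \sum_i g (b i).
Proof.
move=> eq_prod; have perm_ab : perm_eq [seq a i | i <- index_enum 'I_n]
                                       [seq b i | i <- index_enum 'I_n].
  by apply: prod_XsubC_eq; rewrite !big_map.
by have := @perm_big V +%R 0 _ _ _ predT g perm_ab; rewrite !big_map.
Qed.

Section Adjoint.
Variable R : realType.
Local Notation C := R[i].

Lemma adjmxE m n (X : 'M[C]_(m, n)) i j : adjmx X i j = (X j i)^*.
Proof. by rewrite !mxE. Qed.

Lemma adjmxK m n (X : 'M[C]_(m, n)) : adjmx (adjmx X) = X.
Proof. by apply/matrixP => i j; rewrite !mxE conjcK. Qed.

Lemma adjmxM m n p (X : 'M[C]_(m, n)) (Y : 'M[C]_(n, p)) :
  adjmx (X *m Y) = adjmx Y *m adjmx X.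
Proof. by rewrite /adjmx map_mxM trmx_mul. Qed.

Lemma adjmxZ m n (a : C) (X : 'M[C]_(m, n)) : adjmx (a *: X) = a^*%C *: adjmx X.
Proof. by apply/matrixP => i j; rewrite !mxE rmorphM. Qed.

Lemma adjmx1 n : adjmx (1%:M : 'M[C]_n) = 1%:M.
Proof. by apply/matrixP => i j; rewrite !mxE eq_sym conjc_nat. Qed.

Lemma trmxC_adjmx m n (X : 'M[C]_(m, n)) : (X ^t*)%sesqui = adjmx X.
Proof. by rewrite /adjmx map_trmx. Qed.

Lemma qformZ n (a : C) (W : 'M[C]_n) psi : qform (a *: W) psi = a * qform W psi.
Proof. by rewrite /qform -scalemxAr -scalemxAl mxE. Qed.

Lemma qformB n (W1 W2 : 'M[C]_n) psi : qform (W1 - W2) psi = qform W1 psi - qform W2 psi.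
Proof. by rewrite /qform mulmxBr mulmxBl !mxE. Qed.

Lemma qform_rank1 n (v psi : 'cV[C]_n) :
  qform (v *m adjmx v) psi = `|(adjmx v *m psi) 0 0| ^+ 2.
Proof.
rewrite /qform mulmxA -mulmxA -[adjmx psi *m v]adjmxK adjmxM adjmxK sqr_normc mulrC.
by rewrite mxE big_ord1 adjmxE.
Qed.

End Adjoint.

Section Coordinates.
Variables (R : realType) (d : nat).
Local Notation C := R[i].

Lemma tensmx_ketE (a b i j : 'I_d) :
  tensmx (ket R a) (ket R b) (mxtens_index (i, j)) 0 = (a == i)%:R * (b == j)%:R.
Proof.
by rewrite !mxE !mxtens_indexK /= ![Ordinal _]ord1 !eqxx !andbT (eq_sym i) (eq_sym j).
Qed.

Lemma vec_ofE (A : 'M[C]_d) i j : vec_of A (mxtens_index (i, j)) 0 = A i j.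
Proof.
rewrite /vec_of summxE -(sum_delta i (fun a => A a j)); apply: eq_bigr => a _.
rewrite summxE -(sum_delta j (fun b => (i == a)%:R * A a b)); apply: eq_bigr => b _.
by rewrite mxE tensmx_ketE [a == i]eq_sym [b == j]eq_sym; ring.
Qed.

Lemma vec_of_dot (A B : 'M[C]_d) :
  (adjmx (vec_of B) *m vec_of A) 0 0 = \tr (adjmx B *m A).
Proof.
rewrite mxE sum_mxtens_index /mxtrace exchange_big; apply: eq_bigr => i _.
by rewrite mxE; apply: eq_bigr => j _; rewrite adjmxE !vec_ofE adjmxE.
Qed.

Lemma qform1_vec_of (A : 'M[C]_d) : qform 1%:M (vec_of A) = \tr (adjmx A *m A).
Proof. by rewrite /qform mulmx1 vec_of_dot. Qed.

Lemma omegaE : omega R d = (Num.sqrt (d%:R : R))^-1%:C *: vec_of 1%:M.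
Proof.
congr (_ *: _); apply/matrixP => k l; rewrite [l]ord1.
case: (mxtens_indexP k) => i j; rewrite vec_ofE summxE mxE.
under eq_bigr => a _ do rewrite tensmx_ketE eq_sym.
by rewrite sum_delta.
Qed.

Lemma PomegaE : Pomega R d = (d%:R^-1 : R)%:C *: (vec_of 1%:M *m adjmx (vec_of 1%:M)).
Proof.
rewrite /Pomega omegaE adjmxZ -scalemxAl -scalemxAr scalerA; congr (_ *: _).
by rewrite conjc_real -rmorphM -expr2 exprVn sqr_sqrtr ?ler0n.
Qed.

Lemma qform_Pomega_vec_of (A : 'M[C]_d) :
  qform (Pomega R d) (vec_of A) = (d%:R^-1 : R)%:C * `|\tr A| ^+ 2.
Proof. by rewrite PomegaE qformZ qform_rank1 vec_of_dot adjmx1 mul1mx. Qed.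

End Coordinates.

Section PhiT.
Variables (R : realType) (d : nat).
Local Notation C := R[i].

Lemma mxtrace_delta (i k : 'I_d) : \tr (delta_mx i k : 'M[C]_d) = (i == k)%:R.
Proof.
rewrite /mxtrace; under eq_bigr => a _ do rewrite mxE -mulnb natrM eq_sym.
exact: sum_delta.
Qed.

Lemma choi_Phi_t (t : R) :
  choi (@Phi_t R d t) = 1%:M - t%:C *: (vec_of 1%:M *m adjmx (vec_of 1%:M)).
Proof.
apply/matrixP => x y.
case: (mxtens_indexP x) => i j; case: (mxtens_indexP y) => k l.
rewrite /choi summxE; under eq_bigr => a _ do rewrite summxE.
under eq_bigr => a _ do under eq_bigr => b _ do rewrite tensmxE mxE -mulnb natrM -mulrA.
under eq_bigr => a _ do rewrite -mulr_sumr sum_delta.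
rewrite sum_delta /Phi_t !mxE big_ord1 adjmxE !vec_ofE !mxE conjc_nat mxtrace_delta.
rewrite (inj_eq (can_inj (@mxtens_indexK d d))) xpair_eqE.
by rewrite -(mulnb (i == k)) -(mulnb (j == i)) !natrM (eq_sym i j) (eq_sym k l).
Qed.

Lemma qform_choi_Phi_t (t : R) psi : (0 < d)%N ->
  qform (choi (@Phi_t R d t)) psi =
  qform 1%:M psi - (t * d%:R)%:C * qform (Pomega R d) psi.
Proof.
move=> d_gt0; rewrite choi_Phi_t qformB qformZ PomegaE qformZ mulrA -rmorphM.
by rewrite -mulrA divff ?mulr1 // pnatr_eq0 -lt0n.
Qed.

Lemma herm_preserving_Phi_t (t : R) : herm_preserving (@Phi_t R d t).
Proof.
move=> X X_herm; have X_conj a b : (X a b)^* = X b a by rewrite -adjmxE X_herm.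
have tr_conj : (\tr X)^* = \tr X.
  by rewrite /mxtrace rmorph_sum; apply: eq_bigr => a _; apply: X_conj.
apply/matrixP => i j; rewrite adjmxE /Phi_t !mxE rmorphB !rmorphM /= tr_conj X_conj.
by rewrite conjc_nat oppr0 eq_sym.
Qed.

End PhiT.

Section SingularValues.
Variables (R : realType) (d : nat).
Local Notation C := R[i].

Lemma norm_trace_le_sqrt_diag (M : 'M[C]_d) (D : 'rV[C]_d) :
  adjmx M *m M = diag_mx D -> `|\tr M| <= \sum_i sqrtc (D 0 i).
Proof.
move=> MM_diag; have diagE i : D 0 i = \sum_j `|M j i| ^+ 2.
  have := congr1 (fun Z : 'M[C]_d => Z i i) MM_diag.
  rewrite /= [diag_mx D i i]mxE eqxx mulr1n => <-; rewrite mxE.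
  by apply: eq_bigr => j _; rewrite adjmxE sqr_normc mulrC.
have entry_le i : `|M i i| ^+ 2 <= D 0 i.
  by rewrite diagE (bigD1 i) //= lerDl sumr_ge0 // => j _; rewrite exprn_ge0.
apply: le_trans (ler_norm_sum _ _ _) (ler_sum _ _) => i _.
have sqrt_ge0 : 0 <= sqrtc (D 0 i) by rewrite sqrtc_ge0 (le_trans _ (entry_le i)) ?exprn_ge0.
by rewrite -(ler_sqr (normr_ge0 _) sqrt_ge0) sqr_sqrtc.
Qed.

Lemma hermitian_unitary_diag (B : 'M[C]_d) : adjmx B = B -> exists P (D : 'rV[C]_d),
  [/\ adjmx P *m P = 1%:M, P *m adjmx P = 1%:M & B = adjmx P *m diag_mx D *m P].
Proof.
move=> B_herm; have B_normal : B \is normalmx.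
  by apply/normalmxP; rewrite trmxC_adjmx B_herm.
have P_unitary := spectral_unitarymx B.
have P_inv : invmx (spectralmx B) = adjmx (spectralmx B).
  by rewrite invmx_unitary // trmxC_adjmx.
exists (spectralmx B), (spectral_diag B); split.
- by rewrite -P_inv mulVmx // unitarymx_unit.
- by have /unitarymxP := P_unitary; rewrite trmxC_adjmx.
- by rewrite -P_inv; apply/orthomx_spectralP.
Qed.

Lemma schmidt_coeffs_trace (A : 'M[C]_d) (s : 'I_d -> R) : schmidt_coeffs A s ->
  `|\tr A| <= (\sum_i s i)%:C /\ \tr (adjmx A *m A) = (\sum_i s i ^+ 2)%:C.
Proof.
case=> _ [s_ge0 charA].
have AA_herm : adjmx (adjmx A *m A) = adjmx A *m A by rewrite adjmxM adjmxK.
have [P [D [PP1 PP1' AA]]] := hermitian_unitary_diag AA_herm.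
pose M := P *m A *m adjmx P.
have trM : \tr M = \tr A by rewrite /M mxtrace_mulC mulmxA PP1 mul1mx.
have MM : adjmx M *m M = diag_mx D.
  rewrite /M !adjmxM adjmxK.
  have -> : P *m (adjmx A *m adjmx P) *m (P *m A *m adjmx P) = P *m (adjmx A *m A) *m adjmx P.
    by rewrite !mulmxA -(mulmxA _ (adjmx P) P) PP1 mulmx1.
  by rewrite AA !mulmxA PP1' mul1mx -mulmxA PP1' mulmx1.
have sum_eq (g : C -> C) : \sum_i g (D 0 i) = \sum_i g (s i ^+ 2)%:C.
  apply: eq_sum_roots; rewrite -charA AA char_poly_similar //.
  by rewrite char_poly_trig ?diag_mx_is_trig //; apply: eq_bigr => i _; rewrite mxE eqxx.
split.
  rewrite -trM; apply: (le_trans (norm_trace_le_sqrt_diag MM)).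
  rewrite sum_eq rmorph_sum le_eqVlt; apply/orP; left; apply/eqP; apply: eq_bigr => i _.
  by rewrite sqrtc_sqrtr ?ler0c ?sqr_ge0 //= sqrtr_sqr ger0_norm.
rewrite AA mxtrace_mulC mulmxA PP1' mul1mx mxtrace_diag rmorph_sum.
exact: (sum_eq id).
Qed.

End SingularValues.

Section ExtremalProfile.
Variables (R : realType) (d k : nat) (t : R).
Local Notation C := R[i].

Definition diag_real (r : 'I_d -> R) : 'M[C]_d := diag_mx (\row_i (r i)%:C).

Lemma adjmx_diag_real r : adjmx (diag_real r) = diag_real r.
Proof.
apply/matrixP => i j; rewrite adjmxE !mxE eq_sym.
by have [->|_] := eqVneq j i; rewrite ?mulr1n ?mulr0n ?conjc_real ?conjc0.
Qed.

Lemma adjmx_mul_diag_real r :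
  adjmx (diag_real r) *m diag_real r = diag_real (fun i => r i ^+ 2).
Proof.
rewrite adjmx_diag_real mulmx_diag; congr diag_mx; apply/rowP => j.
by rewrite !mxE -rmorphM expr2.
Qed.

Lemma mxtrace_diag_real r : \tr (diag_real r) = (\sum_i r i)%:C.
Proof. by rewrite mxtrace_diag rmorph_sum; apply: eq_bigr => i _; rewrite mxE. Qed.

Definition extremal_shape (i : 'I_d) : R :=
  if (i < k)%N then 1 else if i == k :> nat then t else 0.

Definition extremal_profile (i : 'I_d) : R :=
  extremal_shape i / Num.sqrt (k%:R + t ^+ 2).

Hypotheses (kd : (1 <= k <= d)%N) (t01 : 0 <= t <= 1) (kd_t : 0 < t -> (k < d)%N).

Lemma sum_extremal_shape (f : R -> R) : f 0 = 0 ->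
  \sum_i f (extremal_shape i) = k%:R * f 1 + f t.
Proof.
move=> f0; rewrite (bigID (fun i : 'I_d => (i < k)%N)) /=; congr (_ + _).
  have /andP[_ k_le_d] := kd.
  under eq_bigr => i ki do rewrite /extremal_shape ki.
  by rewrite -(big_ord_widen d (fun=> f 1) k_le_d) sumr_const card_ord mulr_natl.
have [t0|t_neq0] := eqVneq t 0.
  rewrite t0 f0 big1 // => i ki; rewrite /extremal_shape (negbTE ki).
  by case: ifP; rewrite ?t0.
have kd' : (k < d)%N by apply: kd_t; rewrite lt_def t_neq0; case/andP: t01.
rewrite (bigD1 (Ordinal kd')) /= ?ltnn // big1 ?addr0 => [|i /andP[ki i_neq]].
  by rewrite /extremal_shape ltnn eqxx.
rewrite /extremal_shape (negbTE ki) ifF //.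
by apply: contraNF i_neq => /eqP ik; apply/eqP/val_inj.
Qed.

Lemma extremal_norm_gt0 : 0 < k%:R + t ^+ 2.
Proof. by rewrite ltr_wpDr ?sqr_ge0 // ltr0n; case/andP: kd. Qed.

Lemma sum_extremal_profile :
  \sum_i extremal_profile i = (k%:R + t) / Num.sqrt (k%:R + t ^+ 2).
Proof. by rewrite -mulr_suml (@sum_extremal_shape id) ?mulr1. Qed.

Lemma sum_sqr_extremal_profile : \sum_i extremal_profile i ^+ 2 = 1.
Proof.
under eq_bigr do rewrite expr_div_n.
rewrite -mulr_suml (@sum_extremal_shape (fun x => x ^+ 2)) ?expr0n // expr1n mulr1.
have n_gt0 := extremal_norm_gt0.
by rewrite sqr_sqrtr ?ltW // divff // gt_eqF.
Qed.

Lemma extremal_shape_ge0 i : 0 <= extremal_shape i.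
Proof. by rewrite /extremal_shape; case: ifP => _ //; case: ifP => _; case/andP: t01. Qed.

Lemma extremal_shape_le1 i : extremal_shape i <= 1.
Proof. by rewrite /extremal_shape; case: ifP => _ //; case: ifP => _; case/andP: t01. Qed.

Lemma extremal_shape_nonincreasing (i j : 'I_d) :
  (i <= j)%N -> extremal_shape j <= extremal_shape i.
Proof.
move=> ij; rewrite {2}/extremal_shape; case: ifP => [_|]; first exact: extremal_shape_le1.
rewrite ltnNge => /negbFE ki; rewrite /extremal_shape ltnNge (leq_trans ki ij) /=.
have [jk|_] := eqVneq (j : nat) k; last by case: ifP => _; case/andP: t01.
suff -> : (i == k :> nat) by [].
by rewrite eqn_leq ki -jk ij.
Qed.

Lemma extremal_profile_schmidt :
  schmidt_coeffs (diag_real extremal_profile) extremal_profile.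
Proof.
have sqrt_gt0 : 0 < Num.sqrt (k%:R + t ^+ 2) by rewrite sqrtr_gt0 extremal_norm_gt0.
split; [|split].
- by move=> i j ij; rewrite ler_pM2r ?invr_gt0 // extremal_shape_nonincreasing.
- by move=> i; rewrite divr_ge0 ?extremal_shape_ge0 ?ltW.
- rewrite adjmx_mul_diag_real char_poly_trig ?diag_mx_is_trig //.
  by apply: eq_bigr => i _; rewrite !mxE eqxx.
Qed.

Lemma extremal_profile_admissible : admissible_profile k t extremal_profile.
Proof.
split=> [j|t_gt0 j jk].
  rewrite /extremal_profile /extremal_shape; case: ifP => [/eqP -> kj|_ kj].
    by rewrite ltnNge kj /=; case: ifP => _; rewrite mul0r.
  by rewrite ltnNge ltnW //= ifF ?mul0r // gtn_eqF.
have head : \sum_(i < d | (i < k)%N) extremal_profile i = k%:R / Num.sqrt (k%:R + t ^+ 2).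
  have /andP[_ k_le_d] := kd.
  under eq_bigr => i ki do rewrite /extremal_profile /extremal_shape ki mul1r.
  by rewrite -(big_ord_widen d (fun=> _) k_le_d) sumr_const card_ord mulr_natl.
rewrite head /extremal_profile /extremal_shape jk ltnn eqxx mulrA divfK //.
by rewrite pnatr_eq0 -lt0n; case/andP: kd.
Qed.

End ExtremalProfile.

Section Mu.
Variables (R : realType) (d : nat).
Local Notation C := R[i].

Definition mu_Pomega (k : nat) (t : R) : R :=
  d%:R^-1 * ((k%:R + t) ^+ 2 / (k%:R + t ^+ 2)).

Lemma mu_Pomega_gt0 (k : nat) (t : R) :
  (0 < d)%N -> (0 < k)%N -> 0 <= t -> 0 < mu_Pomega k t.
Proof.
move=> d_gt0 k_gt0 t_ge0; have k_pos : 0 < k%:R :> R by rewrite ltr0n.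
by rewrite mulr_gt0 ?invr_gt0 ?ltr0n ?divr_gt0 ?exprn_gt0 ?ltr_wpDr ?sqr_ge0.
Qed.

Lemma qform_Pomega_admissible_le (k : nat) (t : R) (A : 'M[C]_d) (s : 'I_d -> R) :
  (1 <= k <= d)%N -> 0 <= t <= 1 ->
  qform 1%:M (vec_of A) = 1 -> schmidt_coeffs A s -> admissible_profile k t s ->
  qform (Pomega R d) (vec_of A) <= (mu_Pomega k t)%:C.
Proof.
move=> kd t01 A_unit sA s_adm; have [trA_le trAA] := schmidt_coeffs_trace sA.
have s_ge0 : forall i, 0 <= s i by case: sA => _ [].
have sum_sqr1 : \sum_i s i ^+ 2 = 1.
  by apply: (@complexI R); rewrite -trAA -qform1_vec_of A_unit.
have := admissible_sqr_sum_le s_ge0 s_adm kd t01; rewrite sum_sqr1 mulr1.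
have n_gt0 := extremal_norm_gt0 t kd.
rewrite -ler_pdivlMr // => sum_le.
rewrite qform_Pomega_vec_of /mu_Pomega rmorphM ler_wpM2l ?ler0c ?invr_ge0 ?ler0n //.
apply: (le_trans (y := ((\sum_i s i) ^+ 2)%:C)); last by rewrite lecR.
by rewrite rmorphXn ler_sqr ?nnegrE ?normr_ge0 ?ler0c ?sumr_ge0.
Qed.

Lemma extremal_vec_of (k : nat) (t : R) :
  (1 <= k <= d)%N -> 0 <= t <= 1 -> (0 < t -> (k < d)%N) ->
  let A : 'M[C]_d := diag_real (extremal_profile k t) in
  qform 1%:M (vec_of A) = 1 /\ qform (Pomega R d) (vec_of A) = (mu_Pomega k t)%:C.
Proof.
move=> kd t01 kd_t A; split.
  by rewrite qform1_vec_of adjmx_mul_diag_real mxtrace_diag_real sum_sqr_extremal_profile.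
rewrite qform_Pomega_vec_of /mu_Pomega mxtrace_diag_real sum_extremal_profile //.
rewrite ger0_norm; last first.
  by rewrite ler0c divr_ge0 ?sqrtr_ge0 // addr_ge0 ?ler0n //; case/andP: t01.
by rewrite -rmorphXn -rmorphM expr_div_n sqr_sqrtr // ltW // (extremal_norm_gt0 t kd).
Qed.

Lemma kfl_theta_bounds (alpha : R) : 1 <= alpha -> alpha <= d%:R ->
  [/\ (1 <= kfl alpha <= d)%N, 0 <= theta alpha <= 1 & (0 < theta alpha -> (kfl alpha < d)%N)].
Proof.
move=> alpha_ge1 alpha_le_d; rewrite /theta /kfl.
have /andP[k_le k_gt] := truncn_itv (le_trans ler01 alpha_ge1).
rewrite -natr1 in k_gt; split.
- by rewrite truncn_gt0 alpha_ge1 -(ler_nat R) (le_trans k_le).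
- apply/andP; split; lra.
- by move=> t_gt0; rewrite -(ltr_nat R); lra.
Qed.

Lemma is_mu_Pomega (alpha : R) : 1 <= alpha -> alpha <= d%:R ->
  is_mu alpha (Pomega R d) (mu_Pomega (kfl alpha) (theta alpha)).
Proof.
move=> alpha_ge1 alpha_le_d; have [kd t01 kd_t] := kfl_theta_bounds alpha_ge1 alpha_le_d.
have [A_unit A_val] := extremal_vec_of kd t01 kd_t.
split=> [|psi [psi_unit [A [s [psiE [sA s_adm]]]]]].
  exists (vec_of (diag_real (extremal_profile (kfl alpha) (theta alpha)))).
  do 2!split => //; do 2!eexists; do 2!split => //.
    exact: extremal_profile_schmidt.
  exact: extremal_profile_admissible.
rewrite psiE in psi_unit *; exact: (qform_Pomega_admissible_le kd t01 psi_unit sA s_adm).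
Qed.

Lemma is_mu_unique (alpha : R) (W : 'M[C]_(d * d)) (m1 m2 : R) :
  is_mu alpha W m1 -> is_mu alpha W m2 -> m1 = m2.
Proof.
move=> [[psi1 [adm1 val1]] le1] [[psi2 [adm2 val2]] le2]; apply/eqP.
by rewrite eq_le -!lecR -[X in (X <= _) && _]val1 -[X in _ && (X <= _)]val2 le1 ?le2.
Qed.

Lemma in_P_Phi_t (alpha t m : R) : (0 < d)%N -> 0 <= t ->
  is_mu alpha (Pomega R d) m -> in_P alpha (@Phi_t R d t) <-> t * d%:R * m <= 1.
Proof.
move=> d_gt0 t_ge0 [[psi0 [adm0 val0]] le_m].
have choiE psi : admissible alpha psi ->
    qform (choi (@Phi_t R d t)) psi = 1 - (t * d%:R)%:C * qform (Pomega R d) psi.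
  by case=> psi_unit _; rewrite qform_choi_Phi_t // psi_unit.
split=> [[_ /(_ psi0 adm0)]|tdm_le1].
  by rewrite choiE // val0 -rmorphM subr_ge0 -(rmorph1 (real_complex R)) lecR.
split=> [|psi adm]; first exact: herm_preserving_Phi_t.
rewrite choiE // subr_ge0 (le_trans (y := (t * d%:R * m)%:C)) //.
  by rewrite [X in _ <= X]rmorphM ler_wpM2l ?le_m // ler0c mulr_ge0 ?ler0n.
by rewrite -(rmorph1 (real_complex R)) lecR.
Qed.

Lemma tstar_mu_Pomega (alpha : R) : (0 < d)%N -> 1 <= alpha -> alpha <= d%:R ->
  1 / (d%:R * tstar alpha) = mu_Pomega (kfl alpha) (theta alpha).
Proof.
move=> d_gt0 alpha_ge1 alpha_le_d.
have [/andP[k_gt0 _] /andP[t_ge0 _] _] := kfl_theta_bounds alpha_ge1 alpha_le_d.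
have k_pos : 0 < (kfl alpha)%:R :> R by rewrite ltr0n.
rewrite /tstar /mu_Pomega; field.
by rewrite !gt_eqF ?ltr0n ?ltr_wpDr ?sqr_ge0.
Qed.

End Mu.

Theorem corollary4p8 (R : realType) (d : nat) (hd : (2 <= d)%N)
    (alpha : R) (h1 : 1 <= alpha) (hd' : alpha <= d%:R) :
  is_mu alpha (Pomega R d) (1 / (d%:R * tstar alpha)) /\
  (forall f : R, is_mu alpha (Pomega R d) f ->
     forall t : R, 0 < t -> t <= 1 ->
       (@in_P R d alpha (@Phi_t R d t) <-> t <= 1 / (d%:R * f))).
Proof.
have d_gt0 : (0 < d)%N by apply: leq_trans hd.
have [/andP[k_gt0 _] /andP[t_ge0 _] _] := kfl_theta_bounds h1 hd'.
have mu := is_mu_Pomega h1 hd'; have mu_gt0 := mu_Pomega_gt0 d_gt0 k_gt0 t_ge0.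
rewrite tstar_mu_Pomega //; split=> // f f_mu s s_gt0 _.
rewrite (is_mu_unique f_mu mu) (in_P_Phi_t d_gt0 (ltW s_gt0) mu).
by rewrite ler_pdivlMr ?(mulrA s) // mulr_gt0 ?ltr0n.
Qed.
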